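(* Let $A=k\langle x_1,\dots,x_n\rangle/(R)$ be a quadratic algebra and $K$ a Hopf algebra such that $A$ is a right $K$-comodule algebra via $\rho_K(x_i)=\sum_{s=1}^n x_s\otimes a_{si}$, $a_{si}\in K$. Then the $K$-coaction is inner-faithful if and only if the assignment $y_{ij}\mapsto a_{ij}$ ($1\le i,j\le n$) induces a surjective Hopf algebra homomorphism $\mathcal O_A(GL)\to K$.
   Context: Let $R=\mathrm{span}\{r_w=\sum_{i,j}c_w^{ij}x_ix_j: w=1,\dots,m\}\subseteq V^{\otimes2}$, $V=A_1$, with the $r_w$ linearly independent; let $R^\perp\subseteq (V^* )^{\otimes2}$ be its annihilator, with basis $r'_u=\sum_{i,j}d_u^{ij}x_i^*x_j^*$, $u=1,\dots,n^2-m$. Let $F$ be the free algebra on $\{y_{ij}\}_{1\le i,j\le n}$ with bialgebra structure $\Delta(y_{ij})=\sum_s y_{is}\otimes y_{sj}$, $\epsilon(y_{ij})=\delta_{ij}$. The quantum matrix space is the bialgebra $\mathcal O_A(M)=F/I$, where $I$ is the ideal generated by $\sum_{i,j,k,l}c_w^{ij}d_u^{kl}y_{ki}y_{lj}$ for all $w,u$; it coacts on $A$ by $x_i\mapsto\sum_s x_s\otimes y_{si}$. The Hopf envelope of a bialgebra $B$ is a Hopf algebra $H(B)$ with a bialgebra map $\phi:B\to H(B)$ such that every bialgebra map from $B$ to a Hopf algebra $H'$ factors uniquely as a Hopf algebra map $H(B)\to H'$ composed with $\phi$. $\mathcal O_A(GL)$ is the Hopf envelope of $\mathcal O_A(M)$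 (which exists), and $y_{ij}$ also denotes the image of $y_{ij}$ in it. A right coaction $\rho$ on $A$ is inner-faithful if $\rho(A)\not\subseteq A\otimes K'$ for every proper Hopf subalgebra $K'\subsetneq K$. *)

From HB Require Import structures.
From mathcomp Require Import all_boot all_order all_algebra.
Set Implicit Arguments. Unset Strict Implicit. Unset Printing Implicit Defensive.
Import GRing.Theory.
Local Open Scope ring_scope.

Section HopfDefs.
Variable k : fieldType.

Definition lin_map (U W : lmodType k) (f : U -> W) : Prop :=
  forall (a : k) (u v : U), f (a *: u + v) = a *: f u + f v.
Definition lin_fun (U : lmodType k) (f : U -> k) : Prop :=
  forall (a : k) (u v : U), f (a *: u + v) = a * f u + f v.

Definition bilin (U V W : lmodType k) (b : U -> V -> W) : Prop :=
  (forall v, lin_map (fun u => b u v)) /\ (forall u, lin_map (b u)).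
Definition trilin (U V X W : lmodType k) (b : U -> V -> X -> W) : Prop :=
  (forall v x, lin_map (fun u => b u v x)) /\ (forall u x, lin_map (fun v => b u v x))
  /\ (forall u v, lin_map (b u v)).

(* An element of U (x)_k V is represented by a finite list of pairs
   (the finite sum of elementary tensors); two lists represent the same
   tensor iff every bilinear map takes the same value on them
   (universal property of the tensor product). *)
Definition teq (U V : lmodType k) (s t : seq (U * V)) : Prop :=
  forall (W : lmodType k) (b : U -> V -> W), bilin b ->
    \sum_(p <- s) b p.1 p.2 = \sum_(p <- t) b p.1 p.2.
Definition teq3 (U V X : lmodType k) (s t : seq (U * V * X)) : Prop :=
  forall (W : lmodType k) (b : U -> V -> X -> W), trilin b ->
    \sum_(p <- s) b p.1.1 p.1.2 p.2 = \sum_(p <- t) b p.1.1 p.1.2 p.2.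

Definition alg_hom (A B : algType k) (f : A -> B) : Prop :=
  lin_map f /\ f 1 = 1 /\ forall x y, f (x * y) = f x * f y.

Definition is_bialg (K : algType k) (D : K -> seq (K * K)) (e : K -> k) : Prop :=
  [/\ [/\ (forall a x y, teq (D (a *: x + y)) ([seq (a *: p.1, p.2) | p <- D x] ++ D y)),
      (forall x y, teq (D (x * y)) [seq (p.1 * q.1, p.2 * q.2) | p <- D x, q <- D y]),
      teq (D 1) [:: (1, 1)] &
      (forall x, teq3 [seq (q.1, q.2, p.2) | p <- D x, q <- D p.1]
                      [seq (p.1, q.1, q.2) | p <- D x, q <- D p.2])],
      [/\ lin_fun e, e 1 = 1 & forall x y, e (x * y) = e x * e y] &
      (forall x, \sum_(p <- D x) e p.1 *: p.2 = x /\ \sum_(p <- D x) e p.2 *: p.1 = x)].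

Definition is_hopf (K : algType k) (D : K -> seq (K * K)) (e : K -> k) (S : K -> K) : Prop :=
  is_bialg D e /\ lin_map S /\
  forall x, \sum_(p <- D x) S p.1 * p.2 = (e x)%:A /\ \sum_(p <- D x) p.1 * S p.2 = (e x)%:A.

Definition bialg_hom (A B : algType k) (DA : A -> seq (A * A)) (eA : A -> k)
  (DB : B -> seq (B * B)) (eB : B -> k) (f : A -> B) : Prop :=
  alg_hom f /\ (forall x, teq (DB (f x)) [seq (f p.1, f p.2) | p <- DA x]) /\
  (forall x, eB (f x) = eA x).

Definition hopf_hom (A B : algType k) (DA : A -> seq (A * A)) (eA : A -> k) (SA : A -> A)
  (DB : B -> seq (B * B)) (eB : B -> k) (SB : B -> B) (f : A -> B) : Prop :=
  bialg_hom DA eA DB eB f /\ forall x, f (SA x) = SB (f x).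

Definition hopf_sub (K : algType k) (D : K -> seq (K * K)) (e : K -> k) (S : K -> K)
  (P : K -> Prop) : Prop :=
  [/\ P 1, (forall a x y, P x -> P y -> P (a *: x + y)),
      (forall x y, P x -> P y -> P (x * y)), (forall x, P x -> P (S x)) &
      (forall x, P x -> exists t, teq (D x) t /\ forall p, p \in t -> P p.1 /\ P p.2)].

Definition comod_alg (A K : algType k) (DK : K -> seq (K * K)) (eK : K -> k)
  (rho : A -> seq (A * K)) : Prop :=
  [/\ (forall a x y, teq (rho (a *: x + y)) ([seq (a *: p.1, p.2) | p <- rho x] ++ rho y)),
      (forall x y, teq (rho (x * y)) [seq (p.1 * q.1, p.2 * q.2) | p <- rho x, q <- rho y]),
      teq (rho 1) [:: (1, 1)],
      (forall x, teq3 [seq (q.1, q.2, p.2) | p <- rho x, q <- rho p.1]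
                      [seq (p.1, q.1, q.2) | p <- rho x, q <- DK p.2]) &
      (forall x, \sum_(p <- rho x) eK p.2 *: p.1 = x)].

Definition tin_right (A K : algType k) (s : seq (A * K)) (P : K -> Prop) : Prop :=
  exists t, teq s t /\ forall p, p \in t -> P p.2.

Definition inner_faithful (A K : algType k) (DK : K -> seq (K * K)) (eK : K -> k)
  (SK : K -> K) (rho : A -> seq (A * K)) : Prop :=
  forall P : K -> Prop, hopf_sub DK eK SK P -> (exists z, ~ P z) ->
    ~ (forall x : A, tin_right (rho x) P).

Definition quad_rel n m (c : 'I_m -> 'I_n -> 'I_n -> k) (B : algType k) (b : 'I_n -> B) : Prop :=
  forall w, \sum_(i < n) \sum_(j < n) c w i j *: (b i * b j) = 0.

(* A together with x_1..x_n is the quadratic algebra k<x_1..x_n>/(R),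
   characterised by its universal property *)
Definition is_quadalg n m (c : 'I_m -> 'I_n -> 'I_n -> k) (A : algType k) (x : 'I_n -> A) : Prop :=
  quad_rel c x /\
  forall (B : algType k) (b : 'I_n -> B), quad_rel c b ->
    exists! f : A -> B, alg_hom f /\ forall i, f (x i) = b i.

Definition in_perp n m (c : 'I_m -> 'I_n -> 'I_n -> k) (d : 'I_n -> 'I_n -> k) : Prop :=
  forall w, \sum_(i < n) \sum_(j < n) c w i j * d i j = 0.

Definition OAM_rel n m (c : 'I_m -> 'I_n -> 'I_n -> k) (B : algType k)
  (z : 'I_n -> 'I_n -> B) : Prop :=
  forall w d, in_perp c d ->
    \sum_(i < n) \sum_(j < n) \sum_(k0 < n) \sum_(l < n)
       (c w i j * d k0 l) *: (z k0 i * z l j) = 0.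

Definition is_OAM n m (c : 'I_m -> 'I_n -> 'I_n -> k) (B : algType k)
  (DB : B -> seq (B * B)) (eB : B -> k) (y : 'I_n -> 'I_n -> B) : Prop :=
  [/\ is_bialg DB eB,
      (forall i j, teq (DB (y i j)) [seq (y i s, y s j) | s <- enum 'I_n]),
      (forall i j, eB (y i j) = (i == j)%:R),
      OAM_rel c y &
      (forall (C : algType k) (z : 'I_n -> 'I_n -> C), OAM_rel c z ->
         exists! f : B -> C, alg_hom f /\ forall i j, f (y i j) = z i j)].

Definition is_hopf_env (B : algType k) (DB : B -> seq (B * B)) (eB : B -> k)
  (H : algType k) (DH : H -> seq (H * H)) (eH : H -> k) (SH : H -> H) (phi : B -> H) : Prop :=
  [/\ is_hopf DH eH SH, bialg_hom DB eB DH eH phi &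
      forall (H' : algType k) (DH' : H' -> seq (H' * H')) (eH' : H' -> k) (SH' : H' -> H'),
        is_hopf DH' eH' SH' ->
        forall g : B -> H', bialg_hom DB eB DH' eH' g ->
          exists! h : H -> H', hopf_hom DH eH SH DH' eH' SH' h /\ forall b, h (phi b) = g b].

End HopfDefs.

(* (=>) For d in R^perp, pushing the relations r_w of A through rho and pairing with the
   functional on A_2 given by d shows that the a_ij satisfy the relations of O_A(M);
   counitality and coassociativity of rho show that their counit and coproduct are the
   matrix ones. So y_ij |-> a_ij is a bialgebra map O_A(M) -> K, which extends to a Hopf
   map f : O_A(GL) -> K. Its image is a Hopf subalgebra containing all a_ij, through which
   rho factors; by inner-faithfulness, f is onto.
   (<=) If rho factors through a Hopf subalgebra K', reading off the coefficients of
   rho(x_i) shows that all a_ij lie in K'. The corestriction of y_ij |-> a_ij to K' lifts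
   to O_A(GL), and by uniqueness in the universal property of the Hopf envelope this lift
   is f, so K = f(O_A(GL)) lies in K'.
   The linear functionals on A come from a representation of A by (n+2) x (n+2)
   matrices; a subalgebra is made into an algebra with a linear retraction onto it,
   obtained from a complement chosen by Zorn's lemma. *)

From HB Require Import structures.
From mathcomp Require Import all_boot all_order all_algebra.
From mathcomp Require Import boolp.
From mathcomp Require classical_sets.
Import GRing.Theory.
Local Open Scope ring_scope.
Set Implicit Arguments. Unset Strict Implicit.

Section Linear.
Variable k : fieldType.

Definition lin_closed (V : lmodType k) (C : V -> Prop) : Prop :=
  forall a u v, C u -> C v -> C (a *: u + v).

Lemma lin_closed0 (V : lmodType k) (C : V -> Prop) u : lin_closed C -> C u -> C 0.
Proof. by move=> hC Cu; have := hC (-1) u u Cu Cu; rewrite scaleN1r addNr. Qed.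

Lemma lin_closedB (V : lmodType k) (C : V -> Prop) u v :
  lin_closed C -> C u -> C v -> C (u - v).
Proof. by move=> hC Cu Cv; have := hC (-1) v u Cv Cu; rewrite scaleN1r addrC. Qed.

Lemma lin_closed_sum (V : lmodType k) (C : V -> Prop) (T : eqType) (t : seq T)
    (l : T -> k) (F : T -> V) :
  lin_closed C -> C 0 -> (forall p, p \in t -> C (F p)) -> C (\sum_(p <- t) l p *: F p).
Proof.
move=> hC C0; elim: t => [|q t IH] Ct; first by rewrite big_nil.
rewrite big_cons; apply: hC; first by apply: Ct; rewrite inE eqxx.
by apply: IH => p pt; apply: Ct; rewrite inE pt orbT.
Qed.

Section LinMap.
Variables (U W : lmodType k) (f : U -> W) (hf : lin_map f).

Lemma lin_map0 : f 0 = 0.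
Proof. by have := hf (-1) 0 0; rewrite scaler0 add0r scaleN1r addNr. Qed.

Lemma lin_mapD u v : f (u + v) = f u + f v.
Proof. by have := hf 1 u v; rewrite !scale1r. Qed.

Lemma lin_mapZ a u : f (a *: u) = a *: f u.
Proof. by have := hf a u 0; rewrite !addr0 lin_map0 addr0. Qed.

Lemma lin_map_sum (I : Type) (r : seq I) (F : I -> U) :
  f (\sum_(i <- r) F i) = \sum_(i <- r) f (F i).
Proof.
elim: r => [|i r IH]; first by rewrite !big_nil lin_map0.
by rewrite !big_cons lin_mapD IH.
Qed.

End LinMap.

Lemma lin_fun_map (U : lmodType k) (f : U -> k) : lin_fun f -> lin_map (f : U -> k^o).
Proof. by move=> hf a u v; rewrite hf. Qed.

Lemma lin_funZ (U : lmodType k) (f : U -> k) : lin_fun f -> forall a u, f (a *: u) = a * f u.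
Proof. by move=> /lin_fun_map/lin_mapZ. Qed.

Lemma lin_fun_sum (U : lmodType k) (f : U -> k) : lin_fun f ->
  forall (I : Type) (r : seq I) (F : I -> U), f (\sum_(i <- r) F i) = \sum_(i <- r) f (F i).
Proof. by move=> /lin_fun_map/lin_map_sum. Qed.

Lemma lin_map_id (U : lmodType k) : lin_map (fun u : U => u).
Proof. by []. Qed.

Lemma lin_map_comp (U V W : lmodType k) (f : U -> V) (g : V -> W) :
  lin_map f -> lin_map g -> lin_map (fun u => g (f u)).
Proof. by move=> hf hg a u v; rewrite hf hg. Qed.

Lemma lin_map_scale (U : lmodType k) (c : k) : lin_map (fun u : U => c *: u).
Proof. by move=> a u v; rewrite scalerDr !scalerA mulrC. Qed.

Lemma lin_map_scalel (U W : lmodType k) (g : U -> k) (w : W) :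
  lin_fun g -> lin_map (fun u => g u *: w).
Proof. by move=> hg a u v; rewrite hg scalerDl scalerA. Qed.

Lemma lin_map_scaler (U W : lmodType k) (g : U -> W) (c : k) :
  lin_map g -> lin_map (fun u => c *: g u).
Proof. by move=> hg a u v; rewrite hg scalerDr !scalerA mulrC. Qed.

Lemma lin_map_sumf (U W : lmodType k) (I : Type) (r : seq I) (F : I -> U -> W) :
  (forall i, lin_map (F i)) -> lin_map (fun u => \sum_(i <- r) F i u).
Proof.
move=> hF a u v; rewrite scaler_sumr -big_split /=.
by apply: eq_bigr => i _; rewrite hF.
Qed.

Lemma lin_map_mull (A : algType k) (c : A) : lin_map (fun u : A => c * u).
Proof. by move=> a u v; rewrite mulrDr scalerAr. Qed.

Lemma lin_map_mulr (A : algType k) (c : A) : lin_map (fun u : A => u * c).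
Proof. by move=> a u v; rewrite mulrDl scalerAl. Qed.

Lemma bilin_comp (U V U' V' W : lmodType k) (b : U' -> V' -> W) (f : U -> U') (g : V -> V') :
  bilin b -> lin_map f -> lin_map g -> bilin (fun u v => b (f u) (g v)).
Proof.
move=> [hb1 hb2] hf hg; split=> [v|u].
- exact: lin_map_comp hf (hb1 _).
- exact: lin_map_comp hg (hb2 _).
Qed.

Lemma bilin_sum (U V W : lmodType k) (I : Type) (r : seq I) (F : I -> U -> V -> W) :
  (forall i, bilin (F i)) -> bilin (fun u v => \sum_(i <- r) F i u v).
Proof.
by move=> hF; split=> [v|u]; apply: lin_map_sumf => i; [exact: (hF i).1 | exact: (hF i).2].
Qed.

Lemma trilin_comp (U V X U' V' X' W : lmodType k) (b : U' -> V' -> X' -> W)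
    (f : U -> U') (g : V -> V') (h : X -> X') :
  trilin b -> lin_map f -> lin_map g -> lin_map h ->
  trilin (fun u v w => b (f u) (g v) (h w)).
Proof.
move=> [hb1 [hb2 hb3]] hf hg hh; split; [|split] => [v w|u w|u v].
- exact: lin_map_comp hf (hb1 _ _).
- exact: lin_map_comp hg (hb2 _ _).
- exact: lin_map_comp hh (hb3 _ _).
Qed.

Section Tensor.
Variables (U V : lmodType k).
Implicit Types s t : seq (U * V).

Lemma teq_sym s t : teq s t -> teq t s. Proof. by move=> h W b hb; rewrite h. Qed.
Lemma teq_trans s t u : teq s t -> teq t u -> teq s u.
Proof. by move=> h1 h2 W b hb; rewrite h1 // h2. Qed.
Lemma teq_cat s s' t t' : teq s s' -> teq t t' -> teq (s ++ t) (s' ++ t').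
Proof. by move=> h1 h2 W b hb; rewrite !big_cat /= h1 // h2. Qed.

End Tensor.

Lemma teq_map (U V U' V' : lmodType k) (f : U -> U') (g : V -> V') (s t : seq (U * V)) :
  lin_map f -> lin_map g -> teq s t ->
  teq [seq (f p.1, g p.2) | p <- s] [seq (f p.1, g p.2) | p <- t].
Proof.
by move=> hf hg h W b hb; rewrite !big_map; exact: h _ _ (bilin_comp hb hf hg).
Qed.

Lemma teq_mul (A B : algType k) (s s' t t' : seq (A * B)) :
  teq s s' -> teq t t' ->
  teq [seq (p.1 * q.1, p.2 * q.2) | p <- s, q <- t]
      [seq (p.1 * q.1, p.2 * q.2) | p <- s', q <- t'].
Proof.
move=> h1 h2 W b hb; rewrite !big_allpairs_dep /=.
transitivity (\sum_(p <- s) \sum_(q <- t') b (p.1 * q.1) (p.2 * q.2)).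
  apply: eq_bigr => p _; apply: (h2 _ (fun u v => b (p.1 * u) (p.2 * v))).
  exact: bilin_comp hb (lin_map_mull _) (lin_map_mull _).
apply: (h1 _ (fun u v => \sum_(q <- t') b (u * q.1) (v * q.2))).
by apply: bilin_sum => q; exact: bilin_comp hb (lin_map_mulr _) (lin_map_mulr _).
Qed.

Definition tlinear (U V W : lmodType k) (R : U -> seq (V * W)) : Prop :=
  forall a u v, teq (R (a *: u + v)) ([seq (a *: p.1, p.2) | p <- R u] ++ R v).

Lemma tlinear_sum (U V W X : lmodType k) (R : U -> seq (V * W)) (b : V -> W -> X) :
  tlinear R -> bilin b -> lin_map (fun u => \sum_(q <- R u) b q.1 q.2).
Proof.
move=> hR hb a u v; rewrite (hR _ _ _ _ _ hb) big_cat big_map /= scaler_sumr.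
by congr (_ + _); apply: eq_bigr => p _; rewrite (lin_mapZ (hb.1 _)).
Qed.

End Linear.

Section LinearComplement.
Variables (k : fieldType) (V : lmodType k) (P : V -> Prop).
Hypotheses (P0 : P 0) (Plin : lin_closed P).

Definition meets_trivially (C : V -> Prop) : Prop :=
  lin_closed C /\ forall v, C v -> P v -> v = 0.

Lemma meets_trivially_extend (C : V -> Prop) v :
  meets_trivially C -> C 0 -> ~ (exists2 p, P p & C (v - p)) ->
  meets_trivially (fun z => exists c l, C c /\ z = c + l *: v).
Proof.
move=> [Ccl Cdis] C0 nv; split.
  move=> a _ _ [c [l [Cc ->]]] [c' [l' [Cc' ->]]].
  exists (a *: c + c'), (a * l + l'); split; first exact: Ccl.
  by rewrite scalerDr scalerDl scalerA addrACA.
move=> _ [c [l [Cc ->]]] Pz; have [l0|l0] := eqVneq l 0.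
  by rewrite l0 scale0r addr0 in Pz *; exact: Cdis.
case: nv; exists (l^-1 *: (c + l *: v)); first by have := Plin l^-1 Pz P0; rewrite addr0.
have -> : v - l^-1 *: (c + l *: v) = (- l^-1) *: c + 0.
  by rewrite scalerDr scalerA mulVf // scale1r addr0 scaleNr opprD addrCA subrr addr0.
exact: Ccl.
Qed.

Lemma maximal_meets_trivially :
  exists C, meets_trivially C /\
    forall C', classical_sets.proper C C' -> ~ meets_trivially C'.
Proof.
apply: classical_sets.Zorn_bigcup => F FQ Ftot; split.
  move=> a u v [X FX Xu] [Y FY Yv]; have [XY|YX] := Ftot X Y FX FY.
  - by exists Y => //; apply: (FQ Y FY).1 => //; exact: XY.
  - by exists X => //; apply: (FQ X FX).1 => //; exact: YX.
by move=> v [X FX Xv] Pv; exact: (FQ X FX).2.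
Qed.

Lemma complement_exists :
  exists C, [/\ lin_closed C, (forall v, C v -> P v -> v = 0) &
                forall v, exists2 p, P p & C (v - p)].
Proof.
have [C [[Ccl Cdis] Cmax]] := maximal_meets_trivially.
have C0 : C 0.
  apply: contrapT => nC0; apply: (Cmax (eq^~ 0)).
    split=> [v Cv|/(_ 0 erefl)//]; case: nC0; exact: lin_closed0 Ccl Cv.
  by split=> [a _ _ -> ->|v ->]; rewrite ?scaler0 ?addr0.
exists C; split=> // v; apply: contrapT => nv.
apply: (Cmax _ _ (meets_trivially_extend (conj Ccl Cdis) C0 nv)); split.
  by move=> u Cu; exists u, 0; rewrite scale0r addr0.
move=> /(_ v (ex_intro _ 0 (ex_intro _ 1 (conj C0 _)))).
rewrite add0r scale1r => /(_ erefl) Cv.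
by case: nv; exists 0; rewrite ?subr0.
Qed.

Lemma linear_projection_exists :
  exists pi : V -> V, [/\ lin_map pi, forall v, P (pi v) & forall v, P v -> pi v = v].
Proof.
have [C [Ccl Cdis Cspan]] := complement_exists.
pose pi v := s2val (cid2 (Cspan v)).
have piP v : P (pi v) /\ C (v - pi v) by rewrite /pi; case: cid2.
have pi_uniq v p : P p -> C (v - p) -> pi v = p.
  move=> Pp Cp; have [Ppi Cpi] := piP v; apply/eqP; rewrite -subr_eq0; apply/eqP.
  apply: Cdis; last exact: lin_closedB.
  have -> : pi v - p = (v - p) - (v - pi v) by rewrite opprB [RHS]addrC addrA subrK.
  exact: lin_closedB.
exists pi; split=> [a u w | v | v Pv].
- apply: pi_uniq; first by apply: Plin; [exact: (piP u).1 | exact: (piP w).1].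
  have -> : a *: u + w - (a *: pi u + pi w) = a *: (u - pi u) + (w - pi w).
    by rewrite scalerBr opprD addrACA.
  by apply: Ccl; [exact: (piP u).2 | exact: (piP w).2].
- exact: (piP v).1.
- by apply: pi_uniq => //; rewrite subrr; exact: lin_closed0 Ccl (piP v).2.
Qed.

End LinearComplement.

Section AlgHom.
Variable k : fieldType.
Implicit Types A B C : algType k.

Lemma alg_hom_lin A B (f : A -> B) : alg_hom f -> lin_map f.
Proof. by case. Qed.

Lemma alg_hom1 A B (f : A -> B) : alg_hom f -> f 1 = 1.
Proof. by case=> _ []. Qed.

Lemma alg_homM A B (f : A -> B) : alg_hom f -> forall u v, f (u * v) = f u * f v.
Proof. by case=> _ []. Qed.

Lemma alg_homA A B (f : A -> B) : alg_hom f -> forall a, f a%:A = a%:A.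
Proof. by move=> hf a; rewrite (lin_mapZ (alg_hom_lin hf)) (alg_hom1 hf). Qed.

Lemma alg_hom_id A : alg_hom (fun u : A => u).
Proof. by []. Qed.

Lemma alg_hom_comp A B C (f : A -> B) (g : B -> C) :
  alg_hom f -> alg_hom g -> alg_hom (fun u => g (f u)).
Proof.
move=> [hf [f1 fM]] [hg [g1 gM]]; split; first exact: lin_map_comp.
by split=> [|u v]; rewrite ?f1 ?g1 ?fM ?gM.
Qed.

End AlgHom.

Definition subalg_type (k : fieldType) (K : algType k) (P : {pred K})
  (_ : GRing.subsemialg_closed P) := {x : K | P x}.
HB.instance Definition _ (k : fieldType) (K : algType k) (P : {pred K})
  (h : GRing.subsemialg_closed P) := [isSub of subalg_type h for @sval K P].
HB.instance Definition _ (k : fieldType) (K : algType k) (P : {pred K})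
  (h : GRing.subsemialg_closed P) := [Choice of subalg_type h by <:].
HB.instance Definition _ (k : fieldType) (K : algType k) (P : {pred K})
  (h : GRing.subsemialg_closed P) :=
  GRing.SubChoice_isSubAlgebra.Build k K P (subalg_type h) h.

Section Subalgebra.
Variables (k : fieldType) (K : algType k) (P : K -> Prop).
Hypotheses (P1 : P 1) (Plin : lin_closed P) (Pmul : forall u v, P u -> P v -> P (u * v)).

Definition subalg_mem : {pred K} := fun z => `[< P z >].

Lemma subalg_memP z : reflect (P z) (z \in subalg_mem).
Proof. by rewrite unfold_in; apply: asboolP. Qed.

Lemma subalg_mem_closed : GRing.subsemialg_closed subalg_mem.
Proof.
have P0 := lin_closed0 Plin P1.
split; first exact/subalg_memP.
- split=> [|u v /subalg_memP Pu /subalg_memP Pv]; apply/subalg_memP => //.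
  by have := Plin 1 Pu Pv; rewrite scale1r.
- by move=> a u /subalg_memP Pu; apply/subalg_memP; have := Plin a Pu P0; rewrite addr0.
- by move=> u v /subalg_memP Pu /subalg_memP Pv; apply/subalg_memP; exact: Pmul.
Qed.

Definition subalg : algType k := subalg_type subalg_mem_closed.

Definition subalg_val (s : subalg) : K := val s.

Lemma subalg_val_alg_hom : alg_hom subalg_val.
Proof. by split; [move=> a u v | split]. Qed.

Lemma subalg_val_inj : injective subalg_val.
Proof. exact: val_inj. Qed.

Lemma subalg_valP s : P (subalg_val s).
Proof. exact/subalg_memP/(valP s). Qed.

(* Through this retraction, identities in K (x) K between lists of elements of P descend
   to the subalgebra ([teq_subalg]). *)
Let proj_spec := cid (linear_projection_exists (lin_closed0 Plin P1) Plin).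

Lemma subalg_proj_subproof z : subalg_mem (projT1 proj_spec z).
Proof. by apply/asboolP; case: (projT2 proj_spec). Qed.

Definition subalg_proj (z : K) : subalg := Sub (projT1 proj_spec z) (subalg_proj_subproof z).

Lemma subalg_projK z : P z -> subalg_val (subalg_proj z) = z.
Proof. by rewrite /subalg_val SubK; case: (projT2 proj_spec) => _ _; apply. Qed.

Lemma subalg_valK s : subalg_proj (subalg_val s) = s.
Proof. by apply: subalg_val_inj; rewrite subalg_projK //; exact: subalg_valP. Qed.

Lemma subalg_proj_lin : lin_map subalg_proj.
Proof.
move=> a u v; apply: subalg_val_inj.
by rewrite (alg_hom_lin subalg_val_alg_hom) /subalg_val !SubK; case: (projT2 proj_spec).
Qed.

Lemma teq_subalg (s t : seq (subalg * subalg)) :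
  teq [seq (subalg_val p.1, subalg_val p.2) | p <- s]
      [seq (subalg_val p.1, subalg_val p.2) | p <- t] -> teq s t.
Proof.
move=> h W b hb; have := h W _ (bilin_comp hb subalg_proj_lin subalg_proj_lin).
rewrite !big_map; under eq_bigr do rewrite !subalg_valK.
by under [in RHS]eq_bigr do rewrite !subalg_valK.
Qed.

Lemma teq3_subalg (s t : seq (subalg * subalg * subalg)) :
  teq3 [seq (subalg_val p.1.1, subalg_val p.1.2, subalg_val p.2) | p <- s]
       [seq (subalg_val p.1.1, subalg_val p.1.2, subalg_val p.2) | p <- t] -> teq3 s t.
Proof.
move=> h W b hb.
have := h W _ (trilin_comp hb subalg_proj_lin subalg_proj_lin subalg_proj_lin).
rewrite !big_map; under eq_bigr do rewrite !subalg_valK.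
by under [in RHS]eq_bigr do rewrite !subalg_valK.
Qed.

End Subalgebra.

Section Generation.
Variable k : fieldType.

(* If the subalgebra generated by the [x i] satisfied the defining relations, the
   identity of [A] would factor through it by uniqueness in the universal property. *)
Lemma universal_gen (I : Type) (A : algType k) (x : I -> A)
    (Rel : forall C : algType k, (I -> C) -> Prop) :
  (forall (C : algType k) (b : I -> C), Rel C b ->
     exists! f : A -> C, alg_hom f /\ forall i, f (x i) = b i) ->
  (forall (S C : algType k) (iota : S -> C) (b : I -> S), alg_hom iota -> injective iota ->
     Rel C (fun i => iota (b i)) -> Rel S b) ->
  Rel A x ->
  forall Q : A -> Prop, Q 1 -> lin_closed Q -> (forall u v, Q u -> Q v -> Q (u * v)) ->
    (forall i, Q (x i)) -> forall z, Q z.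
Proof.
move=> univ transfer Rx Q Q1 Qlin Qmul Qx z.
pose b i := subalg_proj Q1 Qlin Qmul (x i).
have val_b i : subalg_val (b i) = x i by rewrite subalg_projK.
have Rb : Rel _ b.
  apply: (transfer _ _ _ _ (subalg_val_alg_hom _ _ _) (@subalg_val_inj _ _ _ _ _ _)).
  by rewrite (_ : (fun i => _) = x) //; apply: funext => i; rewrite val_b.
have [f [[hf fx] _]] := univ _ b Rb.
have [f0 [_ uniq]] := univ A x Rx.
have -> : z = subalg_val (f z).
  have e1 := uniq (fun u => subalg_val (f u))
    (conj (alg_hom_comp hf (subalg_val_alg_hom _ _ _))
          (fun i => etrans (congr1 _ (fx i)) (val_b i))).
  have e2 := uniq (fun u => u) (conj (alg_hom_id A) (fun i => erefl)).
  by have := congr1 (fun g => g z) (etrans (esym e2) e1).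
exact: subalg_valP.
Qed.

Lemma quad_rel_transfer n m (c : 'I_m -> 'I_n -> 'I_n -> k) (S C : algType k)
    (iota : S -> C) (b : 'I_n -> S) :
  alg_hom iota -> injective iota -> quad_rel c (fun i => iota (b i)) -> quad_rel c b.
Proof.
move=> hi ii hq w; apply: ii; rewrite (lin_map0 (alg_hom_lin hi)) -(hq w).
do 2 (rewrite (lin_map_sum (alg_hom_lin hi)); apply: eq_bigr => ? _).
by rewrite (lin_mapZ (alg_hom_lin hi)) (alg_homM hi).
Qed.

Lemma OAM_rel_transfer n m (c : 'I_m -> 'I_n -> 'I_n -> k) (S C : algType k)
    (iota : S -> C) (b : 'I_n * 'I_n -> S) :
  alg_hom iota -> injective iota ->
  OAM_rel c (fun i j => iota (b (i, j))) -> OAM_rel c (fun i j => b (i, j)).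
Proof.
move=> hi ii hq w d hd; apply: ii; rewrite (lin_map0 (alg_hom_lin hi)) -(hq w d hd).
do 4 (rewrite (lin_map_sum (alg_hom_lin hi)); apply: eq_bigr => ? _).
by rewrite (lin_mapZ (alg_hom_lin hi)) (alg_homM hi).
Qed.

Lemma quadalg_gen n m (c : 'I_m -> 'I_n -> 'I_n -> k) (A : algType k) (x : 'I_n -> A) :
  is_quadalg c x ->
  forall Q : A -> Prop, Q 1 -> lin_closed Q -> (forall u v, Q u -> Q v -> Q (u * v)) ->
    (forall i, Q (x i)) -> forall z, Q z.
Proof.
move=> [hq univ]; apply: (universal_gen (Rel := fun C b => quad_rel c b)) => //.
by move=> S C iota b; exact: quad_rel_transfer.
Qed.

Lemma OAM_gen n m (c : 'I_m -> 'I_n -> 'I_n -> k) (B : algType k)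
    (DB : B -> seq (B * B)) (eB : B -> k) (y : 'I_n -> 'I_n -> B) :
  is_OAM c DB eB y ->
  forall Q : B -> Prop, Q 1 -> lin_closed Q -> (forall u v, Q u -> Q v -> Q (u * v)) ->
    (forall i j, Q (y i j)) -> forall z, Q z.
Proof.
move=> [_ _ _ hR univ] Q Q1 Qlin Qmul Qy.
apply: (@universal_gen _ B (fun p => y p.1 p.2) (fun C b => OAM_rel c (fun i j => b (i, j))))
  => //.
- move=> C b hb; have [f [[hf fy] uf]] := univ C _ hb.
  exists f; split; first by split=> // -[i j]; exact: fy.
  by move=> g [hg gy]; apply: uf; split=> // i j; exact: (gy (i, j)).
- by move=> S C iota b; exact: OAM_rel_transfer.
Qed.

Lemma OAM_hom_gen n m (c : 'I_m -> 'I_n -> 'I_n -> k) (B : algType k)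
    (DB : B -> seq (B * B)) (eB : B -> k) (y : 'I_n -> 'I_n -> B)
    (C : algType k) (g : B -> C) (P : C -> Prop) :
  is_OAM c DB eB y -> alg_hom g ->
  P 1 -> lin_closed P -> (forall u v, P u -> P v -> P (u * v)) ->
  (forall i j, P (g (y i j))) -> forall b, P (g b).
Proof.
move=> hB hg P1 Plin Pmul Py; apply: (OAM_gen hB (Q := fun b => P (g b))) => //=.
- by rewrite (alg_hom1 hg).
- by move=> a u v Pu Pv; rewrite (alg_hom_lin hg); exact: Plin.
- by move=> u v Pu Pv; rewrite (alg_homM hg); exact: Pmul.
Qed.

End Generation.

Section QuadraticFunctionals.
Variables (k : fieldType) (n m : nat) (c : 'I_m -> 'I_n -> 'I_n -> k).
Variables (A : algType k) (x : 'I_n -> A) (hA : is_quadalg c x).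

Let ix (i : 'I_n) : 'I_n.+2 := lift ord0 (widen_ord (leqnSn n) i).

Let ix_inj : injective ix.
Proof. by move=> i j; rewrite /ix => /lift_inj /(congr1 val) /= /val_inj. Qed.

Let ix_neq0 i : (ix i == 0) = false.
Proof. by apply/negbTE; rewrite eq_sym neq_lift. Qed.

Let ix_neq_max i : (ix i == ord_max) = false.
Proof. by apply/negbTE; rewrite -val_eqE /= /bump /= add1n eqSS neq_ltn ltn_ord. Qed.

(* x_i |-> E_{0,i} + sum_r d_{ri} E_{r,n+1}, where the indices 1..n of 'I_(n+2) stand
   for x_1..x_n: products of two such matrices are multiples of E_{0,n+1}. *)
Definition quad_mx (d : 'I_n -> 'I_n -> k) (i : 'I_n) : 'M[k]_n.+2 :=
  delta_mx 0 (ix i) + \sum_(r < n) d r i *: delta_mx (ix r) ord_max.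

Lemma quad_mxM d i j : quad_mx d i * quad_mx d j = d i j *: delta_mx 0 ord_max.
Proof.
have vanish (p q : 'I_n.+2) : p != ord_max ->
    (\sum_(r < n) d r i *: delta_mx (ix r) ord_max) *m delta_mx p q = 0.
  move=> hp; rewrite mulmx_suml big1 // => r _.
  by rewrite -scalemxAl mul_delta_mx_0 1?eq_sym // scaler0.
rewrite -mulmxE mulmxDl !mulmxDr mul_delta_mx_0 ?ix_neq0 // add0r vanish // add0r.
rewrite addrC mulmx_sumr big1 ?add0r => [|s _]; last first.
  by rewrite -scalemxAr vanish ?scaler0 ?ix_neq_max.
rewrite mulmx_sumr (bigD1 i) //= big1 ?addr0 => [|r /negbTE nri].
  by rewrite -scalemxAr mul_delta_mx.
by rewrite -scalemxAr mul_delta_mx_0 ?scaler0 // (inj_eq ix_inj) eq_sym nri.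
Qed.

Lemma quad_mx_rel d : in_perp c d -> quad_rel c (quad_mx d).
Proof.
move=> hd w; under eq_bigr do under eq_bigr do rewrite quad_mxM scalerA.
by under eq_bigr do rewrite -scaler_suml; rewrite -scaler_suml hd scale0r.
Qed.

Lemma quad_mx_coord d s i : quad_mx d i 0 (ix s) = (s == i)%:R.
Proof.
rewrite !mxE summxE big1 ?addr0 => [|r _]; first by rewrite eqxx (inj_eq ix_inj).
by rewrite !mxE eq_sym ix_neq0 mulr0.
Qed.

Lemma quadalg_coord_exists : exists coord : 'I_n -> A -> k,
  (forall s, lin_fun (coord s)) /\ forall s i, coord s (x i) = (s == i)%:R.
Proof.
have hd : in_perp c (fun _ _ => 0).
  by move=> w; apply: big1 => i _; apply: big1 => j _; rewrite mulr0.
have [f [[hf fx] _]] := hA.2 _ _ (quad_mx_rel hd).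
exists (fun s u => f u 0 (ix s)); split=> [s a u v | s i].
- by rewrite (alg_hom_lin hf) !mxE.
- by rewrite fx quad_mx_coord.
Qed.

Lemma quadalg_functional_exists d : in_perp c d ->
  exists delta : A -> k, lin_fun delta /\ forall i j, delta (x i * x j) = d i j.
Proof.
move=> hd; have [f [[hf fx] _]] := hA.2 _ _ (quad_mx_rel hd).
exists (fun u => f u 0 ord_max); split=> [a u v | i j].
- by rewrite (alg_hom_lin hf) !mxE.
- by rewrite (alg_homM hf) !fx quad_mxM !mxE !eqxx mulr1.
Qed.

End QuadraticFunctionals.

Section BialgebraHom.
Variables (k : fieldType) (B K : algType k).
Variables (DB : B -> seq (B * B)) (eB : B -> k) (DK : K -> seq (K * K)) (eK : K -> k).
Hypotheses (hB : is_bialg DB eB) (hK : is_bialg DK eK).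
Variables (g : B -> K) (hg : alg_hom g).

Definition coalg_compat (b : B) : Prop :=
  teq (DK (g b)) [seq (g p.1, g p.2) | p <- DB b] /\ eK (g b) = eB b.

Lemma coalg_compat1 : coalg_compat 1.
Proof.
have [[_ _ DB1 _] [_ eB1 _] _] := hB; have [[_ _ DK1 _] [_ eK1 _] _] := hK.
split; last by rewrite (alg_hom1 hg) eK1 eB1.
move=> W b hb; rewrite (alg_hom1 hg) (DK1 _ _ hb) big_seq1 big_map /=.
by rewrite (DB1 _ _ (bilin_comp hb (alg_hom_lin hg) (alg_hom_lin hg))) big_seq1 /= (alg_hom1 hg).
Qed.

Lemma coalg_compat_lin : lin_closed coalg_compat.
Proof.
have [[DBl _ _ _] [heB _ _] _] := hB; have [[DKl _ _ _] [heK _ _] _] := hK.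
have lg := alg_hom_lin hg.
move=> a u v [Du eu] [Dv ev]; split; last by rewrite lg heK eu ev heB.
move=> W b hb; rewrite lg (DKl _ _ _ _ _ hb) big_cat big_map /=.
rewrite (Du _ _ (bilin_comp hb (lin_map_scale a) (@lin_map_id _ _))) (Dv _ _ hb).
rewrite big_map (DBl _ _ _ _ _ (bilin_comp hb lg lg)) big_cat !big_map /=.
by congr (_ + _); apply: eq_bigr => p _; rewrite (lin_mapZ lg).
Qed.

Lemma coalg_compatM u v : coalg_compat u -> coalg_compat v -> coalg_compat (u * v).
Proof.
have [[_ DBm _ _] [_ _ eBm] _] := hB; have [[_ DKm _ _] [_ _ eKm] _] := hK.
move=> [Du eu] [Dv ev]; split; last by rewrite (alg_homM hg) eKm eu ev eBm.
move=> W b hb; rewrite (alg_homM hg) (DKm _ _ _ _ hb) (teq_mul Du Dv hb).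
rewrite big_map (DBm _ _ _ _ (bilin_comp hb (alg_hom_lin hg) (alg_hom_lin hg))).
rewrite !big_allpairs_dep /= big_map; apply: eq_bigr => p _.
by rewrite big_map; apply: eq_bigr => q _ /=; rewrite !(alg_homM hg).
Qed.

End BialgebraHom.

Section HomComp.
Variable k : fieldType.

Lemma bialg_hom_comp (A B C : algType k) DA eA DB eB DC eC (f : A -> B) (g : B -> C) :
  bialg_hom DA eA DB eB f -> bialg_hom DB eB DC eC g ->
  bialg_hom DA eA DC eC (fun u => g (f u)).
Proof.
move=> [hf [Df ef]] [hg [Dg eg]]; split; first exact: alg_hom_comp.
split=> u; last by rewrite eg ef.
apply: teq_trans (Dg (f u)) _.
by have := teq_map (alg_hom_lin hg) (alg_hom_lin hg) (Df u); rewrite -map_comp.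
Qed.

Lemma hopf_hom_comp (A B C : algType k) DA eA SA DB eB SB DC eC SC (f : A -> B) (g : B -> C) :
  hopf_hom DA eA SA DB eB SB f -> hopf_hom DB eB SB DC eC SC g ->
  hopf_hom DA eA SA DC eC SC (fun u => g (f u)).
Proof.
by move=> [hf Sf] [hg Sg]; split=> [|u]; [exact: bialg_hom_comp hf hg | rewrite Sf Sg].
Qed.

End HomComp.

Section Comodule.
Variables (k : fieldType) (n m : nat) (c : 'I_m -> 'I_n -> 'I_n -> k).
Variables (A : algType k) (x : 'I_n -> A) (hA : is_quadalg c x).
Variables (K : algType k) (DK : K -> seq (K * K)) (eK : K -> k) (hK : is_bialg DK eK).
Variables (a : 'I_n -> 'I_n -> K) (rho : A -> seq (A * K)) (hrho : comod_alg DK eK rho).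
Hypothesis rho_x : forall i, teq (rho (x i)) [seq (x s, a s i) | s <- enum 'I_n].

Lemma rho_tlinear : tlinear rho. Proof. by case: hrho. Qed.

Lemma rhoM u v : teq (rho (u * v)) [seq (p.1 * q.1, p.2 * q.2) | p <- rho u, q <- rho v].
Proof. by case: hrho. Qed.

Lemma sum_rho_x (W : lmodType k) (b : A -> K -> W) i : bilin b ->
  \sum_(p <- rho (x i)) b p.1 p.2 = \sum_(s < n) b (x s) (a s i).
Proof. by move=> hb; rewrite (rho_x i hb) big_map big_enum. Qed.

(* Counitality and coassociativity of rho at x_j, read off with the coordinate functional
   [coord i], give the matrix counit and coproduct on the a_ij. *)
Section Coordinates.
Variable coord : 'I_n -> A -> k.
Hypotheses (coord_lin : forall s, lin_fun (coord s))
  (coord_x : forall s i, coord s (x i) = (s == i)%:R).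

Lemma sum_rho_x_coord (W : lmodType k) (F : K -> W) i j : lin_map F ->
  \sum_(p <- rho (x j)) coord i p.1 *: F p.2 = F (a i j).
Proof.
move=> hF; rewrite (sum_rho_x (b := fun u v => coord i u *: F v)); last first.
  by split=> [v|u]; [exact: lin_map_scalel | exact: lin_map_scaler].
rewrite (bigD1 i) //= coord_x eqxx scale1r big1 ?addr0 // => s nsi.
by rewrite coord_x eq_sym (negbTE nsi) scale0r.
Qed.

Lemma counit_a i j : eK (a i j) = (i == j)%:R.
Proof.
have [_ [heK _ _] _] := hK; have [_ _ _ _ counit] := hrho.
rewrite -(sum_rho_x_coord i j (lin_fun_map heK)) -coord_x -[in RHS](counit (x j)).
rewrite (lin_fun_sum (coord_lin i)); apply: eq_bigr => p _.
by rewrite (lin_funZ (coord_lin i)) mulrC.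
Qed.

Lemma coprod_a i j : teq (DK (a i j)) [seq (a i s, a s j) | s <- enum 'I_n].
Proof.
have DK_tlin : tlinear DK by case: hK => -[].
have [_ _ _ coassoc _] := hrho.
move=> W b hb; rewrite big_map big_enum /=.
pose tau u v w := coord i u *: b v w.
have htau : trilin tau.
  split; [|split] => [v w|u w|u v]; first exact: lin_map_scalel.
    exact: lin_map_scaler (hb.1 w).
  exact: lin_map_scaler (hb.2 v).
have lhs : \sum_(p <- rho (x j)) \sum_(q <- rho p.1) tau q.1 q.2 p.2 =
           \sum_(s < n) b (a i s) (a s j).
  rewrite (sum_rho_x (b := fun u v => \sum_(q <- rho u) tau q.1 q.2 v)); last first.
    split=> [v|u]; last by apply: lin_map_sumf => q; exact: lin_map_scaler (hb.2 _).
    apply: (tlinear_sum (b := fun u' w => tau u' w v)) rho_tlinear _.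
    by split=> [w|z]; [exact: lin_map_scalel | exact: lin_map_scaler (hb.1 v)].
  by apply: eq_bigr => s _; exact: (sum_rho_x_coord i s (hb.1 (a s j))).
have rhs : \sum_(p <- rho (x j)) \sum_(q <- DK p.2) tau p.1 q.1 q.2 =
           \sum_(q <- DK (a i j)) b q.1 q.2.
  rewrite -(sum_rho_x_coord i j (tlinear_sum DK_tlin hb)).
  by apply: eq_bigr => p _; rewrite scaler_sumr.
by have := coassoc (x j) W tau htau; rewrite !big_allpairs_dep /= lhs rhs.
Qed.

End Coordinates.

(* Apply u |-> (delta (x) id) (rho u) to the relation r_w, where delta realises d on A_2. *)
Lemma OAM_rel_a : OAM_rel c a.
Proof.
move=> w d hd; have [delta [hdelta delta_xx]] := quadalg_functional_exists hA hd.
have hb : bilin (fun (u : A) (v : K) => delta u *: v).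
  by split=> [v|u]; [exact: lin_map_scalel | exact: lin_map_scale].
pose L u := \sum_(q <- rho u) delta q.1 *: q.2.
have hL : lin_map L := tlinear_sum rho_tlinear hb.
have L_xx i j : L (x i * x j) = \sum_(s < n) \sum_(t < n) d s t *: (a s i * a t j).
  rewrite /L (rhoM _ _ hb) (teq_mul (rho_x i) (rho_x j) hb).
  rewrite big_allpairs_dep big_map big_enum /=.
  by apply: eq_bigr => s _; rewrite big_map big_enum; apply: eq_bigr => t _; rewrite delta_xx.
rewrite -[RHS](lin_map0 hL) -(hA.1 w) (lin_map_sum hL); apply: eq_bigr => i _.
rewrite (lin_map_sum hL); apply: eq_bigr => j _; rewrite (lin_mapZ hL) L_xx.
rewrite scaler_sumr; apply: eq_bigr => s _.
by rewrite scaler_sumr; apply: eq_bigr => t _; rewrite scalerA.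
Qed.

Lemma comod_bialg_hom (B : algType k) (DB : B -> seq (B * B)) (eB : B -> k)
    (y : 'I_n -> 'I_n -> B) :
  is_OAM c DB eB y ->
  exists g : B -> K, bialg_hom DB eB DK eK g /\ forall i j, g (y i j) = a i j.
Proof.
move=> hB; have [hBb DBy eBy _ univB] := hB.
have [coord [coord_lin coord_x]] := quadalg_coord_exists hA.
have [g [[hg gy] _]] := univB K a OAM_rel_a.
have compat_y i j : coalg_compat DB eB DK eK g (y i j).
  split; last by rewrite gy eBy (counit_a coord_lin coord_x).
  rewrite gy; apply: teq_trans (coprod_a coord_lin coord_x i j) _.
  have := teq_map (alg_hom_lin hg) (alg_hom_lin hg) (DBy i j).
  by rewrite -map_comp (eq_map (g := fun s => (a i s, a s j))) => [/teq_sym|s /=]; rewrite ?gy.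
have compat := OAM_gen hB (coalg_compat1 hBb hK hg) (coalg_compat_lin hBb hK hg)
  (coalg_compatM hBb hK hg) compat_y.
by exists g; split=> //; split=> //; split=> b; case: (compat b).
Qed.

Lemma comod_tin_right (P : K -> Prop) :
  P 1 -> lin_closed P -> (forall u v, P u -> P v -> P (u * v)) ->
  (forall s i, P (a s i)) -> forall z, tin_right (rho z) P.
Proof.
move=> P1 Plin Pmul Pa; apply: (quadalg_gen hA).
- exists [:: (1, 1)]; split; first by case: hrho.
  by move=> p; rewrite inE => /eqP ->.
- move=> b u v [tu [Tu Pu]] [tv [Tv Pv]].
  exists ([seq (b *: p.1, p.2) | p <- tu] ++ tv); split.
    apply: teq_trans (rho_tlinear b u v) _.
    by apply: teq_cat => //; exact: teq_map (lin_map_scale b) (@lin_map_id _ _) Tu.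
  by move=> p; rewrite mem_cat => /orP [/mapP [q qin ->]|]; [exact: Pu qin | exact: Pv].
- move=> u v [tu [Tu Pu]] [tv [Tv Pv]].
  exists [seq (p.1 * q.1, p.2 * q.2) | p <- tu, q <- tv]; split.
    by apply: teq_trans (rhoM u v) _; exact: teq_mul.
  move=> p /allpairsPdep [p1 [p2 [p1in p2in ->]]].
  by apply: Pmul; [exact: Pu p1in | exact: Pv p2in].
- move=> i; exists [seq (x s, a s i) | s <- enum 'I_n]; split; first exact: rho_x.
  by move=> p /mapP [s _ ->]; exact: Pa.
Qed.

Lemma tin_right_coeff (P : K -> Prop) :
  P 0 -> lin_closed P -> (forall z, tin_right (rho z) P) -> forall s i, P (a s i).
Proof.
move=> P0 Plin Prho s i; have [coord [coord_lin coord_x]] := quadalg_coord_exists hA.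
have [t [rho_t Pt]] := Prho (x i).
have hb : bilin (fun (u : A) (v : K) => coord s u *: v).
  by split=> [v|u]; [exact: lin_map_scalel | exact: lin_map_scale].
rewrite -(sum_rho_x_coord coord_lin coord_x s i (@lin_map_id _ _)) (rho_t _ _ hb).
by apply: lin_closed_sum => // p pt; exact: Pt.
Qed.

End Comodule.

Section HopfSub.
Variables (k : fieldType) (K : algType k) (DK : K -> seq (K * K)) (eK : K -> k) (SK : K -> K).
Variables (P : K -> Prop) (hP : hopf_sub DK eK SK P).

Lemma hopf_sub1 : P 1. Proof. by case: hP. Qed.
Lemma hopf_sub_lin : lin_closed P. Proof. by case: hP. Qed.
Lemma hopf_subM u v : P u -> P v -> P (u * v). Proof. by case: hP => _ _ hM _ _; exact: hM. Qed.
Lemma hopf_subS z : P z -> P (SK z). Proof. by case: hP => _ _ _ hS _; exact: hS. Qed.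
Lemma hopf_sub_coprod z : P z ->
  exists t, teq (DK z) t /\ forall p, p \in t -> P p.1 /\ P p.2.
Proof. by case: hP => _ _ _ _ hD; exact: hD. Qed.

End HopfSub.

Lemma hopf_sub_image (k : fieldType) (H K : algType k) DH eH SH DK eK SK (f : H -> K) :
  hopf_hom DH eH SH DK eK SK f -> hopf_sub DK eK SK (fun z => exists w, f w = z).
Proof.
move=> [[hf [Df _]] Sf]; split.
- by exists 1; rewrite (alg_hom1 hf).
- by move=> a _ _ [u <-] [v <-]; exists (a *: u + v); rewrite (alg_hom_lin hf).
- by move=> _ _ [u <-] [v <-]; exists (u * v); rewrite (alg_homM hf).
- by move=> _ [u <-]; exists (SH u); rewrite Sf.
- move=> _ [u <-]; exists [seq (f p.1, f p.2) | p <- DH u]; split; first exact: Df.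
  by move=> p /mapP [q _ ->]; split; eexists.
Qed.

Section HopfSubalgebra.
Variables (k : fieldType) (K : algType k) (DK : K -> seq (K * K)) (eK : K -> k) (SK : K -> K).
Hypothesis hK : is_hopf DK eK SK.
Variables (P : K -> Prop) (hP : hopf_sub DK eK SK P).

Local Notation S := (subalg (hopf_sub1 hP) (hopf_sub_lin hP) (hopf_subM hP)).
Local Notation iota := (@subalg_val _ _ _ (hopf_sub1 hP) (hopf_sub_lin hP) (hopf_subM hP)).
Local Notation proj := (subalg_proj (hopf_sub1 hP) (hopf_sub_lin hP) (hopf_subM hP)).

Let hKb : is_bialg DK eK. Proof. by case: hK. Qed.
Let DK_tlin : tlinear DK. Proof. by case: hKb => -[]. Qed.
Let iota_alg := subalg_val_alg_hom (hopf_sub1 hP) (hopf_sub_lin hP) (hopf_subM hP).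
Let iota_lin := alg_hom_lin iota_alg.
Let iotaP (s : S) : P (iota s) := subalg_valP s.
Let projK := subalg_projK (hopf_sub1 hP) (hopf_sub_lin hP) (hopf_subM hP).

Let coprod_spec (s : S) := cid (hopf_sub_coprod hP (iotaP s)).

Fact sub_coprod_key : unit. Proof. exact: tt. Qed.
Definition sub_coprod : S -> seq (S * S) := locked_with sub_coprod_key
  (fun s => [seq (proj p.1, proj p.2) | p <- projT1 (coprod_spec s)]).
Definition sub_counit (s : S) : k := eK (iota s).
Definition sub_antipode (s : S) : S := proj (SK (iota s)).

Lemma sub_coprodP s : teq (DK (iota s)) [seq (iota p.1, iota p.2) | p <- sub_coprod s].
Proof.
case: (projT2 (coprod_spec s)) => DKt Pt.
suff -> : [seq (iota p.1, iota p.2) | p <- sub_coprod s] = projT1 (coprod_spec s) by [].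
rewrite /sub_coprod unlock -map_comp -[RHS]map_id; apply/eq_in_map => -[u v] /Pt [Pu Pv] /=.
by rewrite !projK.
Qed.

Lemma sum_sub_coprod (W : lmodType k) (G : K -> K -> W) s : bilin G ->
  \sum_(p <- sub_coprod s) G (iota p.1) (iota p.2) = \sum_(p <- DK (iota s)) G p.1 p.2.
Proof.
move=> hG; rewrite -(big_map (fun p => (iota p.1, iota p.2)) xpredT (fun p => G p.1 p.2)).
by rewrite -(sub_coprodP s hG).
Qed.

Lemma sub_coprod_tlinear : tlinear sub_coprod.
Proof.
move=> a u v; apply: teq_subalg => W b hb; rewrite !big_map /= big_cat /= big_map /=.
rewrite (sum_sub_coprod _ hb) iota_lin (DK_tlin a _ _ hb) big_cat big_map /=.
congr (_ + _); last by rewrite sum_sub_coprod.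
under [RHS]eq_bigr do rewrite (lin_mapZ iota_lin).
rewrite (sum_sub_coprod (G := fun u v => b (a *: u) v)) //.
exact: bilin_comp hb (lin_map_scale a) (@lin_map_id _ _).
Qed.

Lemma sub_coprodM u v :
  teq (sub_coprod (u * v)) [seq (p.1 * q.1, p.2 * q.2) | p <- sub_coprod u, q <- sub_coprod v].
Proof.
have [[_ DKM _ _] _ _] := hKb.
apply: teq_subalg => W b hb; rewrite !big_map /= big_allpairs_dep /=.
rewrite (sum_sub_coprod _ hb) (alg_homM iota_alg) (DKM _ _ _ _ hb) big_allpairs_dep /=.
under [RHS]eq_bigr do under eq_bigr do rewrite !(alg_homM iota_alg).
under [RHS]eq_bigr => p _ do
  rewrite (sum_sub_coprod _ (bilin_comp hb (lin_map_mull (iota p.1)) (lin_map_mull (iota p.2)))).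
rewrite (sum_sub_coprod (G := fun u' v' => \sum_(q <- DK (iota v)) b (u' * q.1) (v' * q.2))) //.
by apply: bilin_sum => q; exact: bilin_comp hb (lin_map_mulr _) (lin_map_mulr _).
Qed.

Lemma sub_coprod1 : teq (sub_coprod 1) [:: (1, 1)].
Proof.
have [[_ _ DK1 _] _ _] := hKb.
apply: teq_subalg => W b hb; rewrite big_map /= (sum_sub_coprod _ hb) (alg_hom1 iota_alg).
by rewrite (DK1 _ _ hb) !big_seq1.
Qed.

Lemma sub_coassoc u :
  teq3 [seq (q.1, q.2, p.2) | p <- sub_coprod u, q <- sub_coprod p.1]
       [seq (p.1, q.1, q.2) | p <- sub_coprod u, q <- sub_coprod p.2].
Proof.
have [[_ _ _ DKco] _ _] := hKb.
apply: teq3_subalg => W t ht; rewrite !big_map /= !big_allpairs_dep /=.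
have [ht1 [ht2 ht3]] := ht.
have hl : bilin (fun z w => \sum_(q <- DK z) t q.1 q.2 w).
  split=> [w|z]; last by apply: lin_map_sumf => q; exact: ht3.
  apply: (tlinear_sum (b := fun z z' => t z z' w)) DK_tlin _.
  by split=> [?|?]; [exact: ht1 | exact: ht2].
have hr : bilin (fun z w => \sum_(q <- DK w) t z q.1 q.2).
  split=> [w|z]; first by apply: lin_map_sumf => q; exact: ht1.
  apply: (tlinear_sum (b := fun w w' => t z w w')) DK_tlin _.
  by split=> [?|?]; [exact: ht2 | exact: ht3].
under eq_bigr => p _ do
  rewrite (sum_sub_coprod (G := fun z w => t z w (iota p.2))) ?(conj (ht1 ^~ _) (ht2 ^~ _)) //.
under [RHS]eq_bigr => p _ do
  rewrite (sum_sub_coprod (G := fun z w => t (iota p.1) z w)) ?(conj (ht2 _) (ht3 _)) //.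
rewrite (sum_sub_coprod _ hl) (sum_sub_coprod _ hr).
by have := DKco (iota u) W t ht; rewrite !big_allpairs_dep.
Qed.

Lemma sub_coprod_counit u :
  \sum_(p <- sub_coprod u) sub_counit p.1 *: p.2 = u /\
  \sum_(p <- sub_coprod u) sub_counit p.2 *: p.1 = u.
Proof.
have [_ [heK _ _] DKcu] := hKb.
split; apply: subalg_val_inj; rewrite (lin_map_sum iota_lin);
  under eq_bigr do rewrite (lin_mapZ iota_lin).
- rewrite (sum_sub_coprod (G := fun z w => eK z *: w)); first by case: (DKcu (iota u)).
  by split=> [w|z]; [exact: lin_map_scalel heK | exact: lin_map_scale].
- rewrite (sum_sub_coprod (G := fun z w => eK w *: z)); first by case: (DKcu (iota u)).
  by split=> [w|z]; [exact: lin_map_scale | exact: lin_map_scalel heK].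
Qed.

Lemma sub_is_bialg : is_bialg sub_coprod sub_counit.
Proof.
have [_ [heK eK1 eKM] _] := hKb.
split; [split | split | exact: sub_coprod_counit].
- exact: sub_coprod_tlinear.
- exact: sub_coprodM.
- exact: sub_coprod1.
- exact: sub_coassoc.
- by move=> a u v; rewrite /sub_counit iota_lin heK.
- by rewrite /sub_counit (alg_hom1 iota_alg).
- by move=> u v; rewrite /sub_counit (alg_homM iota_alg).
Qed.

Lemma val_sub_antipode s : iota (sub_antipode s) = SK (iota s).
Proof. by rewrite projK //; apply: (hopf_subS hP); exact: iotaP. Qed.

Lemma sub_is_hopf : is_hopf sub_coprod sub_counit sub_antipode.
Proof.
have [_ [hSK antipode]] := hK.
split; [exact: sub_is_bialg | split=> [a u v | u]].
  by apply: subalg_val_inj; rewrite iota_lin !val_sub_antipode iota_lin hSK.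
split; apply: subalg_val_inj; rewrite (lin_map_sum iota_lin) (alg_homA iota_alg);
  under eq_bigr do rewrite (alg_homM iota_alg) val_sub_antipode.
- rewrite (sum_sub_coprod (G := fun z w => SK z * w)); first by case: (antipode (iota u)).
  by split=> [w|z]; [exact: lin_map_comp hSK (lin_map_mulr _) | exact: lin_map_mull].
- rewrite (sum_sub_coprod (G := fun z w => z * SK w)); first by case: (antipode (iota u)).
  by split=> [w|z]; [exact: lin_map_mulr | exact: lin_map_comp hSK (lin_map_mull _)].
Qed.

Lemma subalg_val_hopf_hom : hopf_hom sub_coprod sub_counit sub_antipode DK eK SK iota.
Proof.
by split=> [|s]; [split=> //; split=> // s; exact: sub_coprodP | exact: val_sub_antipode].
Qed.

Lemma hopf_env_lift_in_sub (B : algType k) (DB : B -> seq (B * B)) (eB : B -> k)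
    (H : algType k) (DH : H -> seq (H * H)) (eH : H -> k) (SH : H -> H) (phi : B -> H)
    (f : H -> K) :
  is_hopf_env DB eB DH eH SH phi -> hopf_hom DH eH SH DK eK SK f ->
  (forall b, P (f (phi b))) -> forall h, P (f h).
Proof.
move=> [_ hphi envH] hf Pf h.
have hfphi := bialg_hom_comp hphi hf.1; have [hfphi_alg [Dfphi efphi]] := hfphi.
pose g b := proj (f (phi b)).
have val_g b : iota (g b) = f (phi b) by rewrite projK.
have hg : bialg_hom DB eB sub_coprod sub_counit g.
  split; [split; [move=> a u v | split=> [|u v]] | split=> b].
  - by apply: subalg_val_inj; rewrite iota_lin !val_g (alg_hom_lin hfphi_alg).
  - by apply: subalg_val_inj; rewrite val_g (alg_hom1 iota_alg) (alg_hom1 hfphi_alg).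
  - by apply: subalg_val_inj; rewrite (alg_homM iota_alg) !val_g (alg_homM hfphi_alg).
  - apply: teq_subalg; apply: teq_trans (teq_sym (sub_coprodP (g b))) _.
    rewrite val_g -map_comp (eq_map (g := fun p => (f (phi p.1), f (phi p.2)))) => [|p /=].
      exact: Dfphi.
    by rewrite !val_g.
  - by rewrite /sub_counit val_g efphi.
have [l [[hl l_phi] _]] := envH _ _ _ _ sub_is_hopf g hg.
have [f0 [_ uniq]] := envH K DK eK SK hK _ hfphi.
have e1 := uniq f (conj hf (fun b => erefl)).
have e2 := uniq (fun w => iota (l w))
  (conj (hopf_hom_comp hl subalg_val_hopf_hom) (fun b => etrans (congr1 iota (l_phi b)) (val_g b))).
have -> : f h = iota (l h) by have := congr1 (fun F => F h) (etrans (esym e1) e2).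
exact: iotaP.
Qed.

End HopfSubalgebra.

Unset Implicit Arguments. Set Strict Implicit.

Theorem lemma2p7 (k : fieldType) (n m : nat) (c : 'I_m -> 'I_n -> 'I_n -> k)
  (c_indep : forall l : 'I_m -> k,
      (forall i j, \sum_(w < m) l w * c w i j = 0) -> forall w, l w = 0)
  (A : algType k) (x : 'I_n -> A) (hA : is_quadalg c x)
  (B : algType k) (DB : B -> seq (B * B)) (eB : B -> k) (y : 'I_n -> 'I_n -> B)
  (hB : is_OAM c DB eB y)
  (H : algType k) (DH : H -> seq (H * H)) (eH : H -> k) (SH : H -> H) (phi : B -> H)
  (hH : is_hopf_env DB eB DH eH SH phi)
  (K : algType k) (DK : K -> seq (K * K)) (eK : K -> k) (SK : K -> K)
  (hK : is_hopf DK eK SK)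
  (a : 'I_n -> 'I_n -> K) (rho : A -> seq (A * K))
  (hrho : comod_alg DK eK rho)
  (hrhox : forall i, teq (rho (x i)) [seq (x s, a s i) | s <- enum 'I_n]) :
  inner_faithful DK eK SK rho <->
  exists f : H -> K, hopf_hom DH eH SH DK eK SK f /\
    (forall i j, f (phi (y i j)) = a i j) /\ (forall z : K, exists h : H, f h = z).
Proof.
have hKb : is_bialg DK eK by case: hK.
have [_ [hphi _] envH] := hH.
split=> [faithful | [f [hf [f_y f_onto]]] P hP [z z_notin] rho_in_P].
- have [g [hg g_y]] := comod_bialg_hom hA hKb hrho hrhox hB.
  have [f [[hf f_phi] _]] := envH K DK eK SK hK g hg.
  exists f; split=> //; split=> [i j | z]; first by rewrite f_phi g_y.
  have im_sub := hopf_sub_image hf; have [im1 im_lin imM _ _] := im_sub.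
  apply: contrapT => z_notin; apply: (faithful _ im_sub (ex_intro _ z z_notin)).
  apply: (comod_tin_right hA hrho hrhox im1 im_lin imM) => s i.
  by exists (phi (y s i)); rewrite f_phi.
- have [P1 Plin Pmul _ _] := hP.
  have Pa := tin_right_coeff hA hrhox (lin_closed0 Plin P1) Plin rho_in_P.
  have P_fphi : forall b, P (f (phi b)).
    by apply: (OAM_hom_gen hB (alg_hom_comp hphi hf.1.1)) => // i j; rewrite f_y.
  apply: z_notin; have [w <-] := f_onto z.
  exact: (hopf_env_lift_in_sub hK hP hH hf P_fphi w).
Qed.
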